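(* In any Minkowski space $X$, if $\{\mathbf{o}\mathbf{x}_1,\dots,\mathbf{o}\mathbf{x}_n\}$ is a floating FT configuration, then $\{\mathbf{o}\mathbf{x}_1,\dots,\mathbf{o}\mathbf{x}_{n-1}\}$ is an absorbing FT configuration.
   Context: A Minkowski space is a finite-dimensional real normed space $(X,\|\cdot\|)$. A Fermat-Torricelli (FT) point of finitely many points $\mathbf{y}_1,\dots,\mathbf{y}_m$ is a minimizer of $\mathbf{x}\mapsto\sum_i\|\mathbf{x}-\mathbf{y}_i\|$. A configuration $\{\mathbf{x}_0\mathbf{x}_i: i=1,\dots,n\}$ is a set of segments from $\mathbf{x}_0$ with $\mathbf{x}_i\neq\mathbf{x}_0$; it is a floating FT configuration if $\mathbf{x}_0$ is an FT point of $\{\mathbf{x}_1,\dots,\mathbf{x}_n\}$, and an absorbing FT configuration if $\mathbf{x}_0$ is an FT point of $\{\mathbf{x}_0,\mathbf{x}_1,\dots,\mathbf{x}_n\}$. *)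

(* A Minkowski space (finite-dimensional real normed space)
   is modelled as 'rV[R]_d (R : realType, any d) with an arbitrary norm N. *)
From mathcomp Require Import all_boot all_order all_algebra.
From mathcomp Require Import reals.
Set Implicit Arguments. Unset Strict Implicit. Unset Printing Implicit Defensive.
Import Order.TTheory GRing.Theory Num.Theory.
Local Open Scope ring_scope.

Definition is_norm (R : realType) (d : nat) (N : 'rV[R]_d -> R) : Prop :=
  [/\ forall x, N x = 0 -> x = 0,
      forall (a : R) x, N (a *: x) = `|a| * N x &
      forall x y, N (x + y) <= N x + N y].

Definition FT_point (R : realType) (d : nat) (N : 'rV[R]_d -> R)
    (ys : seq 'rV[R]_d) (x0 : 'rV[R]_d) : Prop :=
  forall x, \sum_(y <- ys) N (x0 - y) <= \sum_(y <- ys) N (x - y).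

Definition configuration (R : realType) (d : nat) (x0 : 'rV[R]_d)
    (xs : seq 'rV[R]_d) : Prop := forall y, y \in xs -> y != x0.

Definition floating_FT (R : realType) (d : nat) (N : 'rV[R]_d -> R)
    (x0 : 'rV[R]_d) (xs : seq 'rV[R]_d) : Prop :=
  configuration x0 xs /\ FT_point N xs x0.

Definition absorbing_FT (R : realType) (d : nat) (N : 'rV[R]_d -> R)
    (x0 : 'rV[R]_d) (xs : seq 'rV[R]_d) : Prop :=
  configuration x0 xs /\ FT_point N (x0 :: xs) x0.

(* Replacing the last point y by x0 itself: a competitor x loses N (x - y),
   which is at most N (x - x0) + N (x0 - y) by the triangle inequality, while
   x0 loses exactly N (x0 - y) and gains N 0 = 0. *)
From mathcomp Require Import all_boot all_order all_algebra.
From mathcomp Require Import reals.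
Local Open Scope ring_scope.
Import Order.TTheory GRing.Theory Num.Theory.

Section NormFacts.
Variables (R : realType) (d : nat) (N : 'rV[R]_d -> R).
Hypothesis normN : is_norm N.

Lemma is_norm0 : N 0 = 0.
Proof.
by case: normN => _ Nsc _; have := Nsc 0 0; rewrite scale0r normr0 mul0r.
Qed.

Lemma is_norm_sub_tri (x y z : 'rV[R]_d) : N (x - z) <= N (x - y) + N (y - z).
Proof. by case: normN => _ _ Ntr; have := Ntr (x - y) (y - z); rewrite addrA subrK. Qed.

Lemma FT_point_absorb (x0 y : 'rV[R]_d) (ys : seq 'rV[R]_d) :
  FT_point N (rcons ys y) x0 -> FT_point N (x0 :: ys) x0.
Proof.
move=> ft x; rewrite !big_cons subrr is_norm0 add0r.
have := ft x; rewrite -!cats1 !big_cat /= !big_seq1 => ft_x.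
have := le_trans ft_x (lerD (lexx _) (is_norm_sub_tri x x0 y)).
by rewrite addrA lerD2r addrC.
Qed.

End NormFacts.

Lemma configuration_rcons_inv (R : realType) (d : nat) (x0 y : 'rV[R]_d)
    (ys : seq 'rV[R]_d) :
  configuration x0 (rcons ys y) -> configuration x0 ys.
Proof. by move=> cf z zin; apply: cf; rewrite mem_rcons inE zin orbT. Qed.

Theorem corollary3p7 (R : realType) (d : nat) (N : 'rV[R]_d -> R)
    (o : 'rV[R]_d) (xs : seq 'rV[R]_d) (xn : 'rV[R]_d) :
  is_norm N -> floating_FT N o (rcons xs xn) -> absorbing_FT N o xs.
Proof.
move=> normN [cf ft]; split.
- exact: configuration_rcons_inv cf.
- exact: FT_point_absorb ft.
Qed.
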